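(* Let $A$ be an irreducible abstract state space and $B$ an abstract state space. Then every isomorphism state $\omega \in A\otimes_{\max} B$ (if any exists) is pure in $A\otimes_{\max} B$, i.e., lies on an extremal ray of the positive cone of $A\otimes_{\max} B$ (equivalently, $\hat\omega$ lies on an extremal ray of the cone of positive linear maps $A^*\to B$).
   Context: An abstract state space is a pair $(A,u_A)$ where $A$ is a finite-dimensional real vector space with a closed, pointed, generating convex cone $A_+$, and $u_A$ is a strictly positive linear functional (an interior point of the dual cone $A^*_+=\{f\in A^*: f(A_+)\subseteq[0,\infty)\}$). $A$ is irreducible if it admits no decomposition $A=A_1\oplus A_2$ with $A_1,A_2$ nonzero subspaces and $A_+=(A_+\cap A_1)+(A_+\cap A_2)$. $A\otimes_{\max}B$ is the space of bilinear forms on $A^*\times B^*$, with positive cone consisting of forms $\omega$ with $\omega(a,b)\ge0$ for all $a\in A^*_+$, $b\in B^*_+$; a state is a positive such $\omega$ with $\omega(u_A,u_B)=1$. For a bilinear form $\omega$, define $\hat\omega:A^*\to B=B^{**}$ by $\hat\omega(a)(b)=\omega(a,b)$. A state $\omega$ is an isomorphism state if $\hat\omega:A^*\to B$ is an order-isomorphism, i.e., a linear bijection with $\hat\omega(a)\in B_+$ iff $a\in A^*_+$. *)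

From HB Require Import structures.
From mathcomp Require Import all_boot all_order all_algebra.
From mathcomp Require Import all_classical all_reals all_analysis.
Set Implicit Arguments. Unset Strict Implicit. Unset Printing Implicit Defensive.
Import Order.TTheory GRing.Theory Num.Theory.
Import numFieldNormedType.Exports.
Local Open Scope classical_set_scope.
Local Open Scope ring_scope.

(* A finite-dimensional real vector space is modelled by coordinates 'rV[R]_n.
   Its dual A^* is also modelled by 'rV[R]_n, via the canonical pairing below. *)
Definition dpair (R : realType) (n : nat) (a f : 'rV[R]_n) : R :=
  \sum_(i < n) a 0 i * f 0 i.

Definition convex_cone (R : realType) (n : nat) (C : set 'rV[R]_n) : Prop :=
  C 0 /\ (forall x y, C x -> C y -> C (x + y)) /\
  (forall (t : R) x, 0 <= t -> C x -> C (t *: x)).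

Definition pointed_cone (R : realType) (n : nat) (C : set 'rV[R]_n) : Prop :=
  forall x, C x -> C (- x) -> x = 0.

Definition generating_cone (R : realType) (n : nat) (C : set 'rV[R]_n) : Prop :=
  forall v, exists a b, C a /\ C b /\ v = a - b.

Definition dual_cone (R : realType) (n : nat) (C : set 'rV[R]_n) : set 'rV[R]_n :=
  [set f | forall a, C a -> 0 <= dpair a f].

Definition abstract_state_space (R : realType) (n : nat)
    (C : set 'rV[R]_n) (u : 'rV[R]_n) : Prop :=
  [/\ convex_cone C, closed C, pointed_cone C, generating_cone C
    & (interior (dual_cone C)) u].

Definition irreducible_ss (R : realType) (n : nat) (C : set 'rV[R]_n) : Prop :=
  ~ exists A1 A2 : {vspace 'rV[R]_n},
      [/\ (A1 + A2)%VS = fullv, (A1 :&: A2)%VS = 0%VS,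
          A1 != 0%VS, A2 != 0%VS &
          C = [set x | exists a1 a2, [/\ C a1, a1 \in A1, C a2, a2 \in A2
                                        & x = a1 + a2]]].

(* A ⊗_max B: bilinear forms on A^* x B^*, modelled as n x m matrices M with
   omega(f, g) = sum_ij f_i M_ij g_j *)
Definition bform (R : realType) (n m : nat) (M : 'M[R]_(n, m))
    (f : 'rV[R]_n) (g : 'rV[R]_m) : R :=
  (f *m M *m g^T) 0 0.

Definition max_tensor_cone (R : realType) (n m : nat)
    (CA : set 'rV[R]_n) (CB : set 'rV[R]_m) : set 'M[R]_(n, m) :=
  [set M | forall f g, dual_cone CA f -> dual_cone CB g -> 0 <= bform M f g].

Definition max_state (R : realType) (n m : nat)
    (CA : set 'rV[R]_n) (uA : 'rV[R]_n) (CB : set 'rV[R]_m) (uB : 'rV[R]_m)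
    (M : 'M[R]_(n, m)) : Prop :=
  max_tensor_cone CA CB M /\ bform M uA uB = 1.

(* hat omega : A^* -> B = B^**, f |-> omega(f, .); in coordinates f |-> f *m M,
   since bform M f g = dpair (f *m M) g. *)
Definition omega_hat (R : realType) (n m : nat) (M : 'M[R]_(n, m))
    (f : 'rV[R]_n) : 'rV[R]_m := f *m M.

Definition order_isomorphism (R : realType) (n m : nat)
    (DA : set 'rV[R]_n) (CB : set 'rV[R]_m) (T : 'rV[R]_n -> 'rV[R]_m) : Prop :=
  bijective T /\ forall f, CB (T f) <-> DA f.

Definition isomorphism_state (R : realType) (n m : nat)
    (CA : set 'rV[R]_n) (uA : 'rV[R]_n) (CB : set 'rV[R]_m) (uB : 'rV[R]_m)
    (M : 'M[R]_(n, m)) : Prop :=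
  max_state CA uA CB uB M /\ order_isomorphism (dual_cone CA) CB (omega_hat M).

Definition on_extremal_ray (R : realType) (V : lmodType R) (C : set V) (x : V) : Prop :=
  [/\ C x, x != 0 &
      forall y z, C y -> C z -> x = y + z -> exists t : R, 0 <= t /\ y = t *: x].

(* If [Y + Z = M] in the maximal tensor cone with [M] an isomorphism state and
   [N] the inverse of [M], then [h |-> h (Y N)^T] and its complement
   [h |-> h (Z N)^T] are both positive maps of [A] (by the bipolar theorem).
   A positive map dominated by the identity fixes every extremal ray of [A_+],
   and since [A_+] is the sum of its extremal rays, two distinct eigenvalues on
   extremal rays [l1 <> l2] would split [A_+] along the kernel and the image of
   the map minus [l1], which irreducibility forbids.  Hence [Y N] is scalar and
   [Y] is a multiple of [M]. *)

From Pilot Require Import Defs.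
From HB Require Import structures.
From mathcomp Require Import all_boot all_order all_algebra.
From mathcomp Require Import all_classical all_reals all_analysis.
From mathcomp Require Import ring lra.
Set Implicit Arguments. Unset Strict Implicit. Unset Printing Implicit Defensive.
Import Order.TTheory GRing.Theory Num.Theory.
Import numFieldNormedType.Exports.
Import Pilot.Defs.
Local Open Scope classical_set_scope.
Local Open Scope ring_scope.

Section DualPairing.
Variables (R : realType) (n : nat).
Implicit Types (a b f g : 'rV[R]_n).

Lemma dpairE a f : dpair a f = (a *m f^T) 0 0.
Proof. by rewrite /dpair !mxE; apply: eq_bigr => i _; rewrite !mxE. Qed.

Lemma dpairC a f : dpair a f = dpair f a.
Proof. by apply: eq_bigr => i _; rewrite mulrC. Qed.

Lemma dpairDl a b f : dpair (a + b) f = dpair a f + dpair b f.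
Proof. by rewrite /dpair -big_split; apply: eq_bigr => i _; rewrite !mxE mulrDl. Qed.

Lemma dpairZl (t : R) a f : dpair (t *: a) f = t * dpair a f.
Proof. by rewrite /dpair mulr_sumr; apply: eq_bigr => i _; rewrite !mxE mulrA. Qed.

Lemma dpairNl a f : dpair (- a) f = - dpair a f.
Proof. by rewrite -scaleN1r dpairZl mulN1r. Qed.

Lemma dpairBl a b f : dpair (a - b) f = dpair a f - dpair b f.
Proof. by rewrite dpairDl dpairNl. Qed.

Lemma dpairDr a f g : dpair a (f + g) = dpair a f + dpair a g.
Proof. by rewrite dpairC dpairDl !(dpairC a). Qed.

Lemma dpairZr (t : R) a f : dpair a (t *: f) = t * dpair a f.
Proof. by rewrite dpairC dpairZl dpairC. Qed.

Lemma dpairNr a f : dpair a (- f) = - dpair a f.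
Proof. by rewrite dpairC dpairNl dpairC. Qed.

Lemma dpairBr a f g : dpair a (f - g) = dpair a f - dpair a g.
Proof. by rewrite dpairDr dpairNr. Qed.

Lemma dpair_delta_mx a i : dpair a (delta_mx 0 i) = a 0 i.
Proof.
rewrite /dpair (bigD1 i) //= big1 ?addr0; first by rewrite !mxE !eqxx mulr1.
by move=> j /negbTE ji; rewrite !mxE ji andbF mulr0.
Qed.

Lemma sqr_coord_le_dpair a i : a 0 i ^+ 2 <= dpair a a.
Proof.
by rewrite /dpair (bigD1 i) //= expr2 lerDl sumr_ge0 // => j _; rewrite -expr2 sqr_ge0.
Qed.

Lemma dpair_self_ge0 a : 0 <= dpair a a.
Proof. by rewrite sumr_ge0 // => i _; rewrite -expr2 sqr_ge0. Qed.

Lemma dpair_self_eq0 a : dpair a a = 0 -> a = 0.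
Proof.
move/eqP; rewrite psumr_eq0 => [/allP a0|i _]; last by rewrite -expr2 sqr_ge0.
apply/rowP => i; rewrite mxE; apply/eqP.
by have := a0 i (mem_index_enum _); rewrite mulf_eq0 orbb.
Qed.

End DualPairing.

Section NearestPoint.
Variables (R : realType) (n : nat).

Definition sqdist (x c : 'rV[R]_n) : R := dpair (x - c) (x - c).

Lemma continuous_sqdist x : continuous (sqdist x).
Proof.
have -> : sqdist x = fun c => \sum_(i < n) (x 0 i - c 0 i) * (x 0 i - c 0 i).
  by apply: funext => c; apply: eq_bigr => i _; rewrite !mxE.
apply: continuous_big => [|i _ c]; first exact: add_continuous.
have cvg_coord : (x 0 i - c' 0 i) @[c' --> c] --> x 0 i - c 0 i.
  by apply: cvgB; [exact: cvg_cst | exact: coord_continuous].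
by apply: cvgM; [exact: nbhs_filter | exact: cvg_coord | exact: cvg_coord].
Qed.

Lemma normr_le_1Dsqr (t : R) : `|t| <= 1 + t ^+ 2.
Proof.
have [t1|t1] := leP `|t| 1; first by rewrite (le_trans t1) // lerDl sqr_ge0.
by rewrite -real_normK ?num_real; nra.
Qed.

Lemma sqdist_nearest (C : set 'rV[R]_n) x : closed C -> C !=set0 ->
  exists2 p, C p & forall c, C c -> sqdist x p <= sqdist x c.
Proof.
move=> Ccl [c0 Cc0].
pose A := C `&` (sqdist x @^-1` [set y | y <= sqdist x c0]).
pose K := (1 + sqdist x 0) + (1 + sqdist x c0).
have Acl : closed A.
  apply: closedI => //; apply: preimage_closed; last exact: closed_le.
  by move=> y _; exact: continuous_sqdist.
have Abox : A `<=` [set v : 'rV[R]_n | forall i, `[-K, K]%classic (v 0 i)].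
  move=> c [_ xc] i /=; rewrite in_itv /= -ler_norml.
  have -> : c 0 i = x 0 i - (x - c) 0 i by rewrite !mxE opprB addrC subrK.
  apply: (le_trans (ler_normB _ _)); rewrite /K lerD //.
    apply: (le_trans (normr_le_1Dsqr _)); rewrite lerD //.
    by have := sqr_coord_le_dpair x i; rewrite /sqdist subr0.
  apply: (le_trans (normr_le_1Dsqr _)); rewrite lerD //.
  exact: le_trans (sqr_coord_le_dpair (x - c) i) xc.
have Acompact : compact A.
  apply: subclosed_compact Acl _ Abox.
  by apply: (@rV_compact _ _ (fun=> `[-K, K]%classic)) => i; exact: segment_compact.
have [|p /[!inE] -[Cp _] pmin] := EVT_min_rV _ Acompact
    (continuous_subspaceT (@continuous_sqdist x)).
  by exists c0; split => /=.
exists p => // c Cc; have [xc|/ltW xc] := leP (sqdist x c) (sqdist x c0).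
  by apply: pmin; rewrite inE.
by apply: (le_trans _ xc); apply: pmin; rewrite inE; split => /=.
Qed.

Lemma nearest_obtuse (C : set 'rV[R]_n) x p d :
    (forall c, C c -> sqdist x p <= sqdist x c) ->
    (forall s, 0 < s -> s <= 1 -> C (p + s *: d)) ->
  dpair (x - p) d <= 0.
Proof.
move=> pmin Cpd; rewrite leNgt; apply/negP => a_gt0.
set a := dpair (x - p) d in a_gt0; set b := dpair d d.
have b_ge0 : 0 <= b := dpair_self_ge0 d.
have ab_gt0 : 0 < a + b by rewrite ltr_wpDr.
(* this step makes the change [s (s b - 2 a)] of the square distance negative *)
pose s := a / (a + b).
have s_gt0 : 0 < s by rewrite divr_gt0.
have s_le1 : s <= 1 by rewrite ler_pdivrMr // mul1r lerDl.
have := pmin _ (Cpd s s_gt0 s_le1).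
have -> : sqdist x (p + s *: d) = sqdist x p - 2 * s * a + s * s * b.
  rewrite /sqdist opprD addrA !(dpairBl, dpairBr, dpairZl, dpairZr).
  by rewrite /a /b !(dpairBl, dpairBr) (dpairC d x) (dpairC d p) (dpairC p x); ring.
have : s * (a + b) = a by rewrite /s divfK // gt_eqF.
nra.
Qed.

Lemma bipolar (C : set 'rV[R]_n) : convex_cone C -> closed C ->
  forall x, (forall f, dual_cone C f -> 0 <= dpair x f) -> C x.
Proof.
move=> [C0 [CD CZ]] Ccl x x_dual2; apply: contrapT => Cx_neg.
have [p Cp pmin] := sqdist_nearest x Ccl (ex_intro _ 0 C0).
have p_dual : dual_cone C (p - x).
  move=> c Cc /=; rewrite dpairC -opprB dpairNl oppr_ge0.
  by apply: nearest_obtuse pmin _ => s s_gt0 _; apply/CD/CZ => //; exact: ltW.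
have p_obtuse : dpair (x - p) (- p) <= 0.
  apply: nearest_obtuse pmin _ => s _ s_le1.
  rewrite scalerN -{1}[p]scale1r -scalerBl; apply: CZ => //; lra.
have dist_gt0 : 0 < sqdist x p.
  rewrite lt_def dpair_self_ge0 andbT; apply/eqP => /dpair_self_eq0 /eqP.
  by rewrite subr_eq0 => /eqP xp; apply: Cx_neg; rewrite xp.
have := x_dual2 _ p_dual.
have -> : dpair x (p - x) = - sqdist x p + dpair (x - p) (- p).
  by rewrite /sqdist !(dpairBl, dpairBr, dpairNr) (dpairC p x); ring.
lra.
Qed.

End NearestPoint.

Lemma rV_neq0_coord (R : nzRingType) n (v : 'rV[R]_n) : v != 0 -> exists i, v 0 i != 0.
Proof.
move=> v0; apply/existsP; apply: contraNT v0 => /existsPn v0.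
by apply/eqP/rowP => i; rewrite mxE; apply/eqP/negPn/v0.
Qed.

Section ExtremalDecomposition.
Variables (R : realType) (n : nat) (C : set 'rV[R]_n) (u : 'rV[R]_n).
Hypotheses (Ccone : convex_cone C) (Ccl : closed C) (u_int : interior (dual_cone C) u).

Let C0 : C 0 := Ccone.1.
Let CD : forall x y, C x -> C y -> C (x + y) := Ccone.2.1.
Let CZ : forall (t : R) x, 0 <= t -> C x -> C (t *: x) := Ccone.2.2.
Let u_dual : dual_cone C u := interior_subset u_int.

Lemma cone_comb (a b : R) x y : 0 <= a -> 0 <= b -> C x -> C y -> C (a *: x + b *: y).
Proof. by move=> a0 b0 Cx Cy; apply: CD; apply: CZ. Qed.

Lemma cone_big (s : seq 'rV[R]_n) (P : pred 'rV[R]_n) :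
  (forall e, e \in s -> C e) -> C (\sum_(e <- s | P e) e).
Proof.
move=> sC; rewrite big_seq_cond; apply: big_ind => // e /andP [es _].
exact: sC.
Qed.

Lemma dual_interior_coord_bound : exists2 d : R, 0 < d &
  forall x, C x -> forall i, d * `|x 0 i| <= dpair x u.
Proof.
have /nbhs_ballP [r r_gt0 u_ball] := u_int.
exists (r / 2) => [|x Cx i]; first by rewrite divr_gt0.
have shift_ge0 (s : R) : `|s| <= 1 -> 0 <= dpair x u + s * (r / 2) * x 0 i.
  move=> s_le1.
  have : dual_cone C (u + (s * (r / 2)) *: delta_mx 0 i).
    apply: u_ball; split => // a b; rewrite /ball /= !mxE opprD addrA subrr add0r normrN.
    rewrite normrM normrM (gtr0_norm (divr_gt0 r_gt0 _)) //.
    have delta_le1 : `|((a == 0) && (b == i))%:R : R| <= 1.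
      by case: (_ && _); rewrite ?normr0 ?normr1.
    have sr_ge0 : 0 <= `|s| * (r / 2) by rewrite mulr_ge0 ?divr_ge0 // ltW.
    apply: (le_lt_trans (ler_wpM2l sr_ge0 delta_le1)).
    rewrite mulr1; apply: (le_lt_trans (ler_wpM2r (ltW (divr_gt0 r_gt0 _)) s_le1)) => //.
    by rewrite mul1r ltr_pdivrMr // ltr_pMr // ltr1n.
  by move=> /(_ x Cx); rewrite dpairDr dpairZr dpair_delta_mx mulrA.
have := shift_ge0 1; have := shift_ge0 (-1).
rewrite normrN normr1 => /(_ (lexx _)) h1 /(_ (lexx _)) h2.
by have [xi_ge0|xi_lt0] := leP 0 (x 0 i); [rewrite ger0_norm | rewrite ltr0_norm]; lra.
Qed.

Lemma dual_interior_pos c : C c -> c != 0 -> 0 < dpair c u.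
Proof.
move=> Cc /rV_neq0_coord [i ci]; have [d d_gt0 du] := dual_interior_coord_bound.
by apply: lt_le_trans (du _ Cc i); rewrite mulr_gt0 // normr_gt0.
Qed.

Lemma cone_ray_bounded c w : dpair w u = 0 -> w != 0 ->
  exists B, forall t, 0 <= t -> C (c + t *: w) -> t <= B.
Proof.
move=> wu /rV_neq0_coord [i wi]; have [d d_gt0 du] := dual_interior_coord_bound.
exists ((`|c 0 i| + dpair c u / d) / `|w 0 i|) => t t_ge0 Ct.
have := du _ Ct i; rewrite dpairDl dpairZl wu mulr0 addr0 !mxE => cw_le.
have {}cw_le : `|c 0 i + t * w 0 i| <= dpair c u / d by rewrite ler_pdivlMr // mulrC.
rewrite ler_pdivlMr ?normr_gt0 //.
have -> : t * `|w 0 i| = `|(c 0 i + t * w 0 i) - c 0 i|.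
  by rewrite addrC addKr normrM ger0_norm.
by apply: (le_trans (ler_normB _ _)); lra.
Qed.

(* The directions in which [z] can move both ways inside [C]: the linear span of
   the face of [C] generated by [z]. *)
Definition face_dir (z v : 'rV[R]_n) : Prop :=
  exists2 eps : R, 0 < eps & forall t, `|t| <= eps -> C (z + t *: v).

Lemma face_dir_cone z v : face_dir z v -> C z.
Proof.
by case=> eps eps_gt0 zv; have := zv 0; rewrite normr0 scale0r addr0; apply; exact: ltW.
Qed.

Lemma face_dir0 z : C z -> face_dir z 0.
Proof. by move=> Cz; exists 1 => // t _; rewrite scaler0 addr0. Qed.

Lemma face_dirD z v w : face_dir z v -> face_dir z w -> face_dir z (v + w).
Proof.
move=> [e1 e1_gt0 zv] [e2 e2_gt0 zw].
exists (Num.min e1 e2 / 2) => [|t t_le]; first by rewrite divr_gt0 // lt_min e1_gt0.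
have t2_le : `|2 * t| <= Num.min e1 e2.
  by rewrite normrM ger0_norm // mulrC -ler_pdivlMr.
have -> : z + t *: (v + w) = 2^-1 *: (z + (2 * t) *: v) + 2^-1 *: (z + (2 * t) *: w).
  by apply/rowP => k; rewrite !mxE; field.
apply: cone_comb; rewrite ?invr_ge0 //.
  by apply: zv; apply: le_trans t2_le _; rewrite ge_min lexx.
by apply: zw; apply: le_trans t2_le _; rewrite ge_min lexx orbT.
Qed.

Lemma face_dirZ z v (a : R) : face_dir z v -> face_dir z (a *: v).
Proof.
move=> zv; have [->|a0] := eqVneq a 0.
  by rewrite scale0r; exact/face_dir0/(face_dir_cone zv).
case: zv => eps eps_gt0 zv; exists (eps / `|a|) => [|t t_le].
  by rewrite divr_gt0 ?normr_gt0.
by rewrite scalerA; apply: zv; rewrite normrM -ler_pdivlMr ?normr_gt0.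
Qed.

Lemma face_dir_span z (s : seq 'rV[R]_n) : C z -> (forall v, v \in s -> face_dir z v) ->
  forall v, v \in span s -> face_dir z v.
Proof.
move=> Cz; elim: s => [|w s IH] s_dir v.
  by rewrite span_nil memv0 => /eqP ->; exact: face_dir0.
rewrite span_cons => /memv_addP [_ /vlineP [k ->] [x xs ->]].
apply: face_dirD; first by apply/face_dirZ/s_dir; rewrite inE eqxx.
by apply: IH xs => y ys; apply: s_dir; rewrite inE ys orbT.
Qed.

Lemma face_dir_summand y z : C y -> C z -> face_dir (y + z) y.
Proof.
move=> Cy Cz; exists 1 => // t /[!ler_norml] /andP [t_ge _].
by rewrite addrAC -{1}[y]scale1r -scalerDl; apply: CD => //; apply: CZ => //; lra.
Qed.

Lemma face_dir_self c : C c -> face_dir c c.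
Proof. by move=> Cc; have := face_dir_summand Cc C0; rewrite addr0. Qed.

Lemma face_dir_mix z1 z2 w (a b : R) : C z2 -> 0 < a -> 0 <= b -> face_dir z1 w ->
  face_dir (a *: z1 + b *: z2) w.
Proof.
move=> Cz2 a_gt0 b_ge0 [eps eps_gt0 zw].
exists (a * eps) => [|t t_le]; first by rewrite mulr_gt0.
have -> : a *: z1 + b *: z2 + t *: w = a *: (z1 + (t / a) *: w) + b *: z2.
  by apply/rowP => k; rewrite !mxE; field; rewrite gt_eqF.
apply: cone_comb => //; first exact: ltW.
by apply: zw; rewrite normrM normfV (gtr0_norm a_gt0) ler_pdivrMr // mulrC.
Qed.

Lemma face_exit c w : face_dir c w -> dpair w u = 0 -> w != 0 ->
  exists2 t, 0 < t & C (c + t *: w) /\ ~ face_dir (c + t *: w) w.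
Proof.
move=> [eps eps_gt0 cw] wu w0.
pose T := [set t : R | 0 <= t /\ C (c + t *: w)].
have Teps : T eps by split; [exact: ltW | apply: cw; rewrite ger0_norm // ltW].
have [B TB] := cone_ray_bounded c wu w0.
have T_sup : has_sup T by split; [exists eps | exists B => t [t_ge0 Ct]; exact: TB].
have T_closed : closed T.
  apply: closedI; first exact: closed_ge.
  apply: preimage_closed => // t _.
  by apply: cvgD; [exact: cvg_cst | exact: scalel_continuous].
have T_supT : T (sup T).
  by rewrite {1}((closure_id T).1 T_closed); apply: closure_sup; case: T_sup.
have eps_le : eps <= sup T by apply: sup_upper_bound.
exists (sup T); first exact: lt_le_trans eps_le.
split; first by case: T_supT.
case=> eps' eps'_gt0 cw'.
have : T (sup T + eps').
  split; first by apply: addr_ge0; [apply/ltW/(lt_le_trans eps_gt0 eps_le) | exact: ltW].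
  by rewrite scalerDl addrA; apply: cw'; rewrite ger0_norm // ltW.
by move/(sup_upper_bound T_sup); lra.
Qed.

Lemma extremal_scale e (a : R) : on_extremal_ray C e -> 0 < a -> on_extremal_ray C (a *: e).
Proof.
move=> [Ce e0 e_ray] a_gt0; have a0 : a != 0 by rewrite gt_eqF.
split; [exact/CZ/Ce/ltW | by rewrite scaler_eq0 negb_or a0 | move=> y z Cy Cz ae_eq].
have ai_ge0 : 0 <= a^-1 by rewrite invr_ge0 ltW.
have [|t [t_ge0 ay_eq]] := e_ray (a^-1 *: y) (a^-1 *: z) (CZ ai_ge0 Cy) (CZ ai_ge0 Cz).
  by rewrite -scalerDr -ae_eq scalerA mulVf ?scale1r.
by exists t; split => //; rewrite scalerA mulrC -scalerA -ay_eq scalerA mulfV ?scale1r.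
Qed.

Lemma not_extremal_face_dir c : C c -> c != 0 -> ~ on_extremal_ray C c ->
  exists v, [/\ face_dir c v, dpair v u = 0 & v != 0].
Proof.
move=> Cc c0 c_nonext.
have [y [z [Cy Cz c_eq y_nonray]]] :
    exists y z, [/\ C y, C z, c = y + z & ~ exists t : R, 0 <= t /\ y = t *: c].
  apply: contrapT => nyz; apply: c_nonext; split => // y z Cy Cz c_eq.
  by apply: contrapT => y_nonray; apply: nyz; exists y, z.
have cu_gt0 := dual_interior_pos Cc c0.
pose r := dpair y u / dpair c u.
exists (y - r *: c); split.
- rewrite -scaleNr; apply: face_dirD; first by rewrite c_eq; exact: face_dir_summand.
  by apply/face_dirZ/face_dir_self.
- by rewrite dpairBl dpairZl /r divfK ?subrr // gt_eqF.
apply/negP; rewrite subr_eq0 => /eqP y_eq; apply: y_nonray.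
by exists r; split => //; rewrite divr_ge0 ?(ltW cu_gt0) //; exact: u_dual.
Qed.

Definition extremal_sum (c : 'rV[R]_n) : Prop :=
  exists2 s : seq 'rV[R]_n, (forall e, e \in s -> on_extremal_ray C e) & c = \sum_(e <- s) e.

Lemma extremal_sumD x y : extremal_sum x -> extremal_sum y -> extremal_sum (x + y).
Proof.
move=> [s1 s1_ext ->] [s2 s2_ext ->]; exists (s1 ++ s2); last by rewrite big_cat.
by move=> e; rewrite mem_cat => /orP [/s1_ext | /s2_ext].
Qed.

Lemma extremal_sumZ (a : R) x : 0 < a -> extremal_sum x -> extremal_sum (a *: x).
Proof.
move=> a_gt0 [s s_ext ->]; exists (map (fun e => a *: e) s); last first.
  by rewrite big_map scaler_sumr.
by move=> _ /mapP [e es ->]; apply: extremal_scale => //; exact: s_ext.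
Qed.

Lemma extremal_sum_or_face_dir c : C c ->
  extremal_sum c \/ exists v, [/\ face_dir c v, dpair v u = 0 & v != 0].
Proof.
move=> Cc; have [->|c0] := eqVneq c 0; first by left; exists [::]; rewrite ?big_nil.
have [c_ext|c_nonext] := pselect (on_extremal_ray C c); last first.
  by right; exact: not_extremal_face_dir.
by left; exists [:: c]; [move=> e /[!inE] /eqP -> | rewrite big_seq1].
Qed.

Definition face_rank_le (z : 'rV[R]_n) (k : nat) : Prop :=
  forall s, free s -> (forall v, v \in s -> face_dir z v) -> (size s <= k)%N.

Lemma face_rank_drop c z v k : face_rank_le c k.+1 -> face_dir c v -> C z ->
  ~ face_dir z v -> (forall w, face_dir z w -> face_dir c w) -> face_rank_le z k.
Proof.
move=> c_rank cv Cz zv z_sub s s_free s_dir.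
have v_notin : v \notin span s by apply/negP => /(face_dir_span Cz s_dir).
suff : (size (v :: s) <= k.+1)%N by [].
apply: c_rank; first by rewrite free_cons s_free andbT.
by move=> x /[!inE] /predU1P [-> // | xs]; apply/z_sub/s_dir.
Qed.

Lemma extremal_decomposition_rank k c : C c -> face_rank_le c k -> extremal_sum c.
Proof.
elim: k c => [|k IH] c Cc c_rank;
  have [//|[v [cv vu v0]]] := extremal_sum_or_face_dir Cc.
  suff : (size [:: v] <= 0)%N by [].
  by apply: c_rank; [rewrite seq1_free | move=> x /[!inE] /eqP ->].
have [t1 t1_gt0 [Cz1 z1v]] := face_exit cv vu v0.
have cv' : face_dir c (- v) by rewrite -scaleN1r; apply: face_dirZ.
have vu' : dpair (- v) u = 0 by rewrite dpairNl vu oppr0.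
have v0' : - v != 0 by rewrite oppr_eq0.
have [t2 t2_gt0 [Cz2 z2v]] := face_exit cv' vu' v0'.
set z1 := c + t1 *: v in Cz1 z1v; set z2 := c + t2 *: - v in Cz2 z2v.
have t12_gt0 : 0 < t1 + t2 by rewrite addr_gt0.
pose a := t2 / (t1 + t2); pose b := t1 / (t1 + t2).
have a_gt0 : 0 < a by rewrite divr_gt0.
have b_gt0 : 0 < b by rewrite divr_gt0.
have c_eq : c = a *: z1 + b *: z2.
  by apply/rowP => j; rewrite /z1 /z2 /a /b !mxE; field; rewrite gt_eqF.
have z1_sub w : face_dir z1 w -> face_dir c w.
  by rewrite c_eq; apply: face_dir_mix => //; exact: ltW.
have z2_sub w : face_dir z2 w -> face_dir c w.
  by rewrite c_eq addrC; apply: face_dir_mix => //; exact: ltW.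
rewrite c_eq; apply: extremal_sumD; apply: extremal_sumZ => //; apply: IH => //.
  exact: face_rank_drop c_rank cv Cz1 z1v z1_sub.
exact: face_rank_drop c_rank cv' Cz2 z2v z2_sub.
Qed.

Lemma extremal_decomposition c : C c -> extremal_sum c.
Proof.
move=> Cc; apply: (@extremal_decomposition_rank (\dim (fullv : {vspace 'rV[R]_n}))) => //.
move=> s s_free _.
by move/eqP: s_free => <-; apply/dimvS/subvf.
Qed.

End ExtremalDecomposition.

Lemma lker_limg_cap0 (K : fieldType) (vT : vectType K) (f : 'End(vT)) :
  (lker f + limg f)%VS = fullv -> (lker f :&: limg f)%VS = 0%VS.
Proof.
move=> ker_img_full; apply/eqP; rewrite -dimv_eq0.
have := dimv_sum_cap (lker f) (limg f); rewrite ker_img_full.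
have := limg_ker_dim f fullv; rewrite capfv => <-.
by move=> /eqP; rewrite -[X in _ == X]addn0 eqn_add2l.
Qed.

Section DominatedMap.
Variables (R : realType) (n : nat) (C : set 'rV[R]_n) (u : 'rV[R]_n) (Q : 'M[R]_n).
Hypotheses (Ccone : convex_cone C) (Ccl : closed C) (u_int : interior (dual_cone C) u)
  (Cgen : generating_cone C) (Cirr : irreducible_ss C)
  (QC : forall c, C c -> C (c *m Q)) (Q'C : forall c, C c -> C (c - c *m Q)).

Lemma extremal_eigen e : on_extremal_ray C e -> exists l : R, e *m Q = l *: e.
Proof.
case=> Ce _ e_ray; have [|t [_ ->]] := e_ray _ _ (QC Ce) (Q'C Ce); last by exists t.
by rewrite addrC subrK.
Qed.

Definition eigen_shift (l : R) : 'End('rV[R]_n) := linfun (mulmxr (Q - l%:M)).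

Lemma eigen_shiftE l x : eigen_shift l x = x *m Q - l *: x.
Proof. by rewrite lfunE /= mulmxBr mul_mx_scalar. Qed.

Lemma eigen_shift_ker l e : e *m Q = l *: e -> e \in lker (eigen_shift l).
Proof. by move=> eQ; rewrite memv_ker eigen_shiftE eQ subrr. Qed.

Lemma eigen_shift_img l mu e : e *m Q = mu *: e -> mu != l -> e \in limg (eigen_shift l).
Proof.
move=> eQ mu_l; have -> : e = eigen_shift l ((mu - l)^-1 *: e).
  rewrite eigen_shiftE -scalemxAl eQ; apply/rowP => j; rewrite !mxE; field.
  by rewrite subr_eq0.
exact: memv_img (memvf _).
Qed.

Lemma cone_split_eigen l c : C c -> exists c1 c2,
  [/\ C c1, c1 \in lker (eigen_shift l), C c2, c2 \in limg (eigen_shift l) & c = c1 + c2].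
Proof.
move=> /(extremal_decomposition Ccone Ccl u_int) [s s_ext ->].
have sC e : e \in s -> C e by move=> /s_ext [].
pose Pl (e : 'rV[R]_n) := e *m Q == l *: e.
exists (\sum_(e <- s | Pl e) e), (\sum_(e <- s | ~~ Pl e) e); split.
- exact: (cone_big Ccone _ sC).
- by rewrite big_seq_cond; apply: memv_suml => e /andP [_ /eqP /eigen_shift_ker].
- exact: (cone_big Ccone _ sC).
- rewrite big_seq_cond; apply: memv_suml => e /andP [es e_nl].
  have [mu eQ] := extremal_eigen (s_ext _ es).
  by apply: (eigen_shift_img eQ); apply: contraNneq e_nl => mu_l; rewrite /Pl eQ mu_l.
- exact: bigID.
Qed.

(* Two extremal eigenvalues [l1 <> l2] would split [C] along the kernel and the
   image of [Q - l1], against irreducibility. *)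
Lemma extremal_eigenvalue_unique e1 e2 l1 l2 : on_extremal_ray C e1 -> on_extremal_ray C e2 ->
  e1 *m Q = l1 *: e1 -> e2 *m Q = l2 *: e2 -> l1 = l2.
Proof.
move=> [_ e1_neq0 _] [_ e2_neq0 _] e1Q e2Q; apply: contrapT => /eqP l12.
pose f := eigen_shift l1.
have ker_img_full : (lker f + limg f)%VS = fullv.
  apply/eqP; rewrite eqEsubv subvf; apply/subvP => x _.
  have [a [b [Ca [Cb ->]]]] := Cgen x.
  have [a1 [a2 [_ a1_ker _ a2_img ->]]] := cone_split_eigen l1 Ca.
  have [b1 [b2 [_ b1_ker _ b2_img ->]]] := cone_split_eigen l1 Cb.
  by rewrite opprD addrACA; apply: memv_add; exact: memvB.
apply: Cirr; exists (lker f), (limg f); split => //.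
- exact: lker_limg_cap0.
- by apply: contraNneq e1_neq0 => ker0; rewrite -memv0 -ker0 eigen_shift_ker.
- apply: contraNneq e2_neq0 => img0; rewrite -memv0 -img0.
  by apply: (eigen_shift_img e2Q); rewrite eq_sym.
apply/seteqP; split => [x /(cone_split_eigen l1) [x1 [x2 [? ? ? ? ->]]] | x].
  by exists x1, x2.
by case=> x1 [x2 [Cx1 _ Cx2 _ ->]]; exact: Ccone.2.1.
Qed.

Lemma dominated_map_scalar : exists t : R, Q = t%:M.
Proof.
have [l l_ext] : exists l : R, forall e, on_extremal_ray C e -> e *m Q = l *: e.
  have [[e e_ext]|no_ext] := pselect (exists e, on_extremal_ray C e); last first.
    by exists 0 => e e_ext; case: no_ext; exists e.
  have [l eQ] := extremal_eigen e_ext; exists l => e' e'_ext.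
  have [l' e'Q] := extremal_eigen e'_ext.
  by rewrite e'Q (extremal_eigenvalue_unique e'_ext e_ext e'Q eQ).
have l_cone c : C c -> c *m Q = l *: c.
  move=> /(extremal_decomposition Ccone Ccl u_int) [s s_ext ->].
  rewrite mulmx_suml scaler_sumr !big_seq; apply: eq_bigr => e es.
  exact/l_ext/s_ext.
exists l; apply/row_matrixP => i; rewrite !rowE mul_mx_scalar.
by have [a [b [Ca [Cb ->]]]] := Cgen (delta_mx 0 i); rewrite mulmxBl !l_cone // scalerBr.
Qed.

End DominatedMap.

Lemma mulmxr_bijective_inv (R : nzRingType) n m (M : 'M[R]_(n, m)) :
  bijective (fun f : 'rV[R]_n => f *m M) -> exists N, N *m M = 1%:M /\ M *m N = 1%:M.
Proof.
case=> T TK KT; pose N : 'M[R]_(m, n) := \matrix_i T (delta_mx 0 i).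
have NM : N *m M = 1%:M by apply/row_matrixP => i; rewrite row_mul rowK row1 KT.
have MNf (f : 'rV[R]_n) : f *m M *m N = f.
  by rewrite -{1}(TK (f *m M *m N)) -mulmxA NM mulmx1 TK.
exists N; split => //.
by apply/row_matrixP => i; rewrite row_mul row1 rowE MNf.
Qed.

(* With [N] the inverse of [omega_hat M], [h |-> h (Y N)^T] is the map of [A]
   dual to [f |-> (omega_hat Y f) N]. *)
Lemma max_tensor_cone_compose (R : realType) n m (CA : set 'rV[R]_n) (CB : set 'rV[R]_m)
    (N : 'M[R]_(m, n)) (Y : 'M[R]_(n, m)) :
  convex_cone CA -> closed CA -> (forall b, CB b -> dual_cone CA (b *m N)) ->
  max_tensor_cone CA CB Y -> forall h, CA h -> CA (h *m (Y *m N)^T).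
Proof.
move=> CAcone CAcl N_pos Y_max h CAh; apply: bipolar CAcone CAcl _ _ => f f_dual.
have -> : dpair (h *m (Y *m N)^T) f = bform Y f (h *m N^T).
  rewrite dpairE /bform; have -> : h *m (Y *m N)^T *m f^T = (f *m Y *m (h *m N^T)^T)^T.
    by rewrite !trmx_mul !trmxK !mulmxA.
  by rewrite mxE.
apply: Y_max => // b CBb.
by rewrite dpairE trmx_mul trmxK mulmxA -dpairE dpairC; exact: N_pos CBb _ CAh.
Qed.

Theorem corollary3p5 (R : realType) (n m : nat)
    (CA : set 'rV[R]_n) (uA : 'rV[R]_n) (CB : set 'rV[R]_m) (uB : 'rV[R]_m) :
  abstract_state_space CA uA -> irreducible_ss CA ->
  abstract_state_space CB uB ->
  forall M : 'M[R]_(n, m), isomorphism_state CA uA CB uB M ->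
    on_extremal_ray (max_tensor_cone CA CB) M.
Proof.
move=> [CAcone CAcl _ CAgen uA_int] CAirr [_ _ _ _ uB_int] M.
move=> [[M_max MuAuB] [M_bij M_iso]].
have [N [NM MN]] := mulmxr_bijective_inv M_bij.
have N_pos b : CB b -> dual_cone CA (b *m N).
  by move=> CBb; apply/M_iso; rewrite /omega_hat -mulmxA NM mulmx1.
split => //.
  by apply: contra_eq_neq MuAuB => ->; rewrite /bform mulmx0 mul0mx mxE eq_sym oner_eq0.
move=> Y Z Y_max Z_max M_eq.
have [t YN] : exists t : R, (Y *m N)^T = t%:M.
  apply: (dominated_map_scalar CAcone CAcl uA_int CAgen CAirr) => c CAc.
    exact: max_tensor_cone_compose CAcone CAcl N_pos Y_max _ CAc.
  have -> : c - c *m (Y *m N)^T = c *m (Z *m N)^T.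
    by rewrite -[c in c - _]mulmx1 -trmx1 -MN M_eq mulmxDl linearD mulmxDr addrC addKr.
  exact: max_tensor_cone_compose CAcone CAcl N_pos Z_max _ CAc.
have Y_eq : Y = t *: M.
  by rewrite -[Y]mulmx1 -NM mulmxA -[Y *m N]trmxK YN tr_scalar_mx mul_scalar_mx.
exists t; split => //.
have := Y_max _ _ (interior_subset uA_int) (interior_subset uB_int).
by rewrite Y_eq /bform -scalemxAr -scalemxAl mxE -/(bform M uA uB) MuAuB mulr1.
Qed.
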